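(* Let $a,b\in K$. Then: (1) The skew rational function $(T-b)^{-1}$ is defined at $a$ if and only if $b\notin\Delta(a)$ and, for every $c\in\Delta(a)$, the equation $\sigma(x)c+\delta(x)-bx=1$ has a solution $x\in K$. (2) If $(T-b)^{-1}$ is defined at $a$, then its value at $a$ is the unique solution $x\in K$ of $\sigma(x)a+\delta(x)-bx=1$.
   Context: Let $K$ be a skew field, $K^*=K\setminus\{0\}$, $\sigma\colon K\to K$ a ring endomorphism and $\delta\colon K\to K$ a $\sigma$-derivation ($\delta$ additive, $\delta(ab)=\sigma(a)\delta(b)+\delta(a)b$). $K[T;\sigma,\delta]$ is the skew polynomial ring with $Ta=\sigma(a)T+\delta(a)$. The $(\sigma,\delta)$-action of $K^*$ on $K$ is ${}^{b}a=\sigma(b)ab^{-1}+\delta(b)b^{-1}$; $\Delta(a)=\{{}^{b}a:b\in K^*\}$ is the $(\sigma,\delta)$-conjugacy class of $a$. For $P\in K[T;\sigma,\delta]$ and $a\in K$, $P(a)$ is the unique element of $K$ with $P(T)-P(a)\in K[T;\sigma,\delta](T-a)$. For a nonempty set $Z$ with a $K^*$-action, functions $Z\to K$ are added pointwise and the skew product is $(f\diamond g)(z)=f({}^{g(z)}z)g(z)$ if $g(z)\neq0$, $0$ otherwise; $f$ is skew invertible if some $g$ satisfies $f\diamond g=g\diamond f=1$, and $g=f^{\langle-1\rangle}$. For an invariant set $A\subseteq K$, $P$ gives the function $A\to K$, $c\mapsto P(c)$. $K(T;\sigma,\delta)$ is the division ring of left fractions of the left Ore domain $K[T;\sigma,\delta]$;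 each $f$ has a unique minimal representation $f=P(T)^{-1}Q(T)$ with $P$ monic of least degree. $f$ is defined at $a$ if $P\colon\Delta(a)\to K$ is skew invertible, and then $f(a)=(P^{\langle-1\rangle}\diamond Q)(a)$ with $P^{\langle-1\rangle}$ the skew inverse on $\Delta(a)$. *)

From Stdlib Require Import ClassicalEpsilon.
From HB Require Import structures.
From mathcomp Require Import all_boot all_algebra.
Set Implicit Arguments.
Unset Strict Implicit.
Unset Printing Implicit Defensive.
Import GRing.Theory.
Local Open Scope ring_scope.

Definition is_skew_field (K : unitRingType) : Prop :=
  forall x : K, x != 0 -> x \is a GRing.unit.

Definition is_sigma_derivation (K : unitRingType) (sigma delta : K -> K) : Prop :=
  (forall x y, delta (x + y) = delta x + delta y) /\
  (forall x y, delta (x * y) = sigma x * delta y + delta x * y).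

Section Skew.
Variable K : unitRingType.
Variables (sigma delta : K -> K).

(* Elements of K[T;sigma,delta] are represented by their coefficient
   polynomials sum_i p_i T^i (coefficients on the left); only the additive
   structure, 'X, constants, size and lead_coef of {poly K} are used. *)

(* left multiplication by T:  T * (sum q_i T^i) = sum (sigma(q_i) T^(i+1) + delta(q_i) T^i) *)
Definition skew_mulT (q : {poly K}) : {poly K} :=
  'X * map_poly sigma q + map_poly delta q.

Definition skew_mul (p q : {poly K}) : {poly K} :=
  \sum_(i < size p) (p`_i)%:P * iter (nat_of_ord i) skew_mulT q.

(* P(a): the unique c in K with P - c in K[T;sigma,delta] (T - a). *)
Definition skew_eval (P : {poly K}) (a : K) : K :=
  epsilon (inhabits 0)
    (fun c => exists Q : {poly K}, P - c%:P = skew_mul Q ('X - a%:P)).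

Definition skew_act (b a : K) : K := sigma b * a * b^-1 + delta b * b^-1.

Definition conj_class (a : K) : K -> Prop :=
  fun c => exists2 b : K, b != 0 & c = skew_act b a.

(* skew product of functions Z -> K (represented as functions K -> K) *)
Definition skew_prod (f g : K -> K) (z : K) : K :=
  if g z == 0 then 0 else f (skew_act (g z) z) * g z.

Definition skew_inverse_on (Z : K -> Prop) (f g : K -> K) : Prop :=
  forall z, Z z -> skew_prod f g z = 1 /\ skew_prod g f z = 1.

Definition skew_invertible_on (Z : K -> Prop) (f : K -> K) : Prop :=
  exists g, skew_inverse_on Z f g.

(* Left fractions P^-1 Q (P <> 0) in K(T;sigma,delta): P^-1 Q = P'^-1 Q'
   iff U P = U' P' <> 0 and U Q = U' Q' for some U, U'. *)
Definition frac_eq (P Q P' Q' : {poly K}) : Prop :=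
  exists U U' : {poly K},
    [/\ skew_mul U P = skew_mul U' P', skew_mul U P != 0 &
        skew_mul U Q = skew_mul U' Q'].

Definition is_rep (P Q P0 Q0 : {poly K}) : Prop :=
  P != 0 /\ frac_eq P Q P0 Q0.

Definition minimal_rep (P Q P0 Q0 : {poly K}) : Prop :=
  [/\ is_rep P Q P0 Q0, P \is monic &
      forall P' Q', is_rep P' Q' P0 Q0 -> P' \is monic -> (size P <= size P')%N].

Definition defined_at (P0 Q0 : {poly K}) (a : K) : Prop :=
  exists P Q, minimal_rep P Q P0 Q0 /\
    skew_invertible_on (conj_class a) (fun c => skew_eval P c).

Definition value_at (P0 Q0 : {poly K}) (a v : K) : Prop :=
  exists P Q g, [/\ minimal_rep P Q P0 Q0,
    skew_inverse_on (conj_class a) (fun c => skew_eval P c) g &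
    v = skew_prod g (fun c => skew_eval Q c) a].

End Skew.

(* Any monic representation P^-1 Q of (T - b)^-1 with deg P <= 1 is (T - b)^-1
   itself: deg P = 0 would make T - b divide a constant, and for P = T - c a
   comparison of degrees and leading coefficients in U (T - c) = U' (T - b),
   U Q = U' forces Q = 1, U = U' and c = b.  So (T - b)^-1 is defined at a
   iff c |-> c - b is skew invertible on Delta(a).  Since
   ((T - b) x)(c) = (^x c - b) x, a right skew inverse g is a choice of
   solutions x = g c of sigma(x) c + delta(x) - b x = 1.  When b is not in
   Delta(a) these solutions are unique, the one at ^(c - b) c being
   (c - b)^-1, which makes g a left inverse as well; and the value at a is
   g(^1 a) * 1 = g a. *)

From HB Require Import structures.
From mathcomp Require Import all_boot all_algebra.
From Stdlib Require Import ClassicalEpsilon.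
Set Implicit Arguments.
Unset Strict Implicit.
Unset Printing Implicit Defensive.
Import GRing.Theory.
Local Open Scope ring_scope.

Section SkewPolynomials.
Variable K : unitRingType.
Variable sigma : {rmorphism K -> K}.
Variable delta : K -> K.
Hypothesis hK : is_skew_field K.
Hypothesis hdelta : is_sigma_derivation sigma delta.

Local Notation sT := (skew_mulT sigma delta).
Local Notation sM := (skew_mul sigma delta).
Local Notation act := (skew_act sigma delta).
Local Notation conj := (conj_class sigma delta).

Lemma deltaD x y : delta (x + y) = delta x + delta y.
Proof. by case: hdelta. Qed.

Lemma deltaM x y : delta (x * y) = sigma x * delta y + delta x * y.
Proof. by case: hdelta. Qed.

Lemma delta0 : delta 0 = 0.
Proof. by apply: (@addrI _ (delta 0)); rewrite -deltaD !addr0. Qed.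

Lemma deltaB x y : delta (x - y) = delta x - delta y.
Proof. by apply: (@addIr _ (delta y)); rewrite -deltaD !subrK. Qed.

Lemma delta1 : delta 1 = 0.
Proof.
by apply: (@addIr _ (delta 1)); rewrite -{3}[1]mul1r deltaM rmorph1 mul1r mulr1 add0r.
Qed.

Lemma neq0_unit (x : K) : x != 0 -> x \is a GRing.unit.
Proof. exact: hK. Qed.

Lemma mul_neq0 (x y : K) : x != 0 -> y != 0 -> x * y != 0.
Proof.
by move=> /neq0_unit hx; apply: contraNneq => /(canRL (mulKr hx)); rewrite mulr0 => ->.
Qed.

Lemma sigma_neq0 x : x != 0 -> sigma x != 0.
Proof.
move=> /neq0_unit hx; apply/eqP => hs; have := oner_neq0 K.
by rewrite -(rmorph1 sigma) -(mulrV hx) rmorphM hs mul0r eqxx.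
Qed.

Lemma sigma_inj : injective sigma.
Proof.
move=> x y hxy; apply/eqP; rewrite -subr_eq0; apply: contraLR isT => /sigma_neq0.
by rewrite rmorphB hxy subrr eqxx.
Qed.

Lemma iter_sigma1 n : iter n sigma 1 = 1.
Proof. by elim: n => //= n ->; rewrite rmorph1. Qed.

Lemma iter_sigma_inj n : injective (iter n sigma).
Proof. by elim: n => //= n ihn x y /sigma_inj /ihn. Qed.

Lemma skew_mulTB (p q : {poly K}) : sT (p - q) = sT p - sT q.
Proof.
apply/polyP => i; rewrite /skew_mulT !(coefD, coefB, coefN, coefXM).
rewrite !coef_map_id0 ?rmorph0 ?delta0 // !coefB rmorphB deltaB.
by case: eqP => _; rewrite ?add0r // opprD addrACA.
Qed.

Lemma skew_mulBr (p q r : {poly K}) : sM p (q - r) = sM p q - sM p r.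
Proof.
have iterB n : iter n sT (q - r) = iter n sT q - iter n sT r.
  by elim: n => //= n ->; rewrite skew_mulTB.
by rewrite /skew_mul -sumrB; apply: eq_bigr => i _; rewrite iterB mulrBr.
Qed.

Lemma skew_mul_widen n (p q : {poly K}) : (size p <= n)%N ->
  sM p q = \sum_(i < n) (p`_i)%:P * iter i sT q.
Proof.
move=> hn; rewrite /skew_mul (big_ord_widen _ (fun i => (p`_i)%:P * iter i sT q) hn).
rewrite big_mkcond; apply: eq_bigr => i _.
by case: ltnP => // hi; rewrite nth_default // mul0r.
Qed.

Lemma skew_mulBl (p q r : {poly K}) : sM (p - q) r = sM p r - sM q r.
Proof.
have hp := leq_maxl (size p) (size q); have hq := leq_maxr (size p) (size q).
have hpq : (size (p - q)%R <= maxn (size p) (size q))%N.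
  by apply: leq_trans (size_polyD p (- q)) _; rewrite size_polyN.
rewrite (skew_mul_widen r hpq) (skew_mul_widen r hp) (skew_mul_widen r hq) -sumrB.
by apply: eq_bigr => i _; rewrite coefB polyCB mulrBl.
Qed.

Lemma skew_mul0r (q : {poly K}) : sM 0 q = 0.
Proof. by rewrite /skew_mul size_poly0 big_ord0. Qed.

Lemma skew_mulr0 (p : {poly K}) : sM p 0 = 0.
Proof. by have := skew_mulBr p 0 0; rewrite !subrr. Qed.

Lemma skew_mulCl c (q : {poly K}) : sM c%:P q = c%:P * q.
Proof.
rewrite /skew_mul size_polyC; have [->|hc] := eqVneq c 0.
  by rewrite big_ord0 mul0r.
by rewrite big_ord1 /= coefC.
Qed.

Lemma skew_mul1l (q : {poly K}) : sM 1 q = q.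
Proof. by rewrite skew_mulCl mul1r. Qed.

Lemma skew_mulr1 (p : {poly K}) : sM p 1 = p.
Proof.
have iterT1 n : iter n sT 1 = 'X^n.
  elim: n => //= n ->; rewrite /skew_mulT map_polyXn exprS.
  suff -> : map_poly delta 'X^n = 0 by rewrite addr0.
  apply/polyP => i; rewrite coef_map_id0 ?delta0 // coefXn coef0.
  by case: eqP; rewrite ?delta1 ?delta0.
rewrite /skew_mul -[RHS]coefK poly_def; apply: eq_bigr => i _.
by rewrite iterT1 mul_polyC.
Qed.

Lemma size_map_sigma (q : {poly K}) : size (map_poly sigma q) = size q.
Proof. by apply: size_map_inj_poly; [exact: sigma_inj | exact: rmorph0]. Qed.

Lemma size_map_delta_lt (q : {poly K}) : q != 0 ->
  (size (map_poly delta q) < size (map_poly sigma q * 'X)%R)%N.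
Proof.
move=> hq; rewrite size_mulX ?size_map_sigma ?ltnS ?size_poly //.
by rewrite -size_poly_eq0 size_map_sigma size_poly_eq0.
Qed.

Lemma size_skew_mulT (q : {poly K}) : q != 0 -> size (sT q) = (size q).+1.
Proof.
move=> hq; rewrite /skew_mulT -(commr_polyX (map_poly sigma q)).
rewrite size_polyDl ?size_map_delta_lt // size_mulX ?size_map_sigma //.
by rewrite -size_poly_eq0 size_map_sigma size_poly_eq0.
Qed.

Lemma lead_coef_skew_mulT (q : {poly K}) : q != 0 ->
  lead_coef (sT q) = sigma (lead_coef q).
Proof.
move=> hq; rewrite /skew_mulT -(commr_polyX (map_poly sigma q)).
rewrite lead_coefDl ?size_map_delta_lt // lead_coefMX.
by apply: lead_coef_map_inj; [exact: sigma_inj | exact: rmorph0].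
Qed.

Lemma size_iter_skew_mulT n (q : {poly K}) : q != 0 ->
  size (iter n sT q) = (size q + n)%N.
Proof.
move=> hq; elim: n => [|n ihn] /=; first by rewrite addn0.
by rewrite size_skew_mulT -?size_poly_eq0 ihn ?addnS // addn_eq0 size_poly_eq0 (negbTE hq).
Qed.

Lemma lead_coef_iter_skew_mulT n (q : {poly K}) : q != 0 ->
  lead_coef (iter n sT q) = iter n sigma (lead_coef q).
Proof.
move=> hq; elim: n => [|n ihn] //=.
rewrite lead_coef_skew_mulT ?ihn // -size_poly_eq0 size_iter_skew_mulT //.
by rewrite addn_eq0 size_poly_eq0 (negbTE hq).
Qed.

Lemma size_skew_mul_lower n (p q : {poly K}) : q != 0 ->
  (size (\sum_(i < n) (p`_i)%:P * iter i sT q)%R < size q + n)%N.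
Proof.
move=> hq; elim/big_ind: _ => [||i _].
- by rewrite size_poly0 addn_gt0 lt0n size_poly_eq0 hq.
- by move=> r s hr hs; rewrite (leq_ltn_trans (size_polyD r s)) // gtn_max hr hs.
- rewrite mul_polyC (leq_ltn_trans (size_scale_leq _ _)) //.
  by rewrite size_iter_skew_mulT // ltn_add2l.
Qed.

Lemma skew_mul_lead_term (p q : {poly K}) : p != 0 ->
  sM p q = (lead_coef p)%:P * iter (size p).-1 sT q
           + \sum_(i < (size p).-1) (p`_i)%:P * iter i sT q.
Proof.
move=> hp; have hsp : (0 < size p)%N by rewrite size_poly_gt0.
by rewrite /skew_mul -(prednK hsp) big_ord_recr /= addrC lead_coefE.
Qed.

Lemma size_skew_mul_lead_term (p q : {poly K}) : p != 0 -> q != 0 ->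
  size ((lead_coef p)%:P * iter (size p).-1 sT q) = (size q + (size p).-1)%N.
Proof.
move=> hp hq; rewrite mul_polyC lreg_size ?size_iter_skew_mulT //.
by apply/mulrI/neq0_unit; rewrite lead_coef_eq0.
Qed.

Lemma size_skew_mul (p q : {poly K}) : p != 0 -> q != 0 ->
  size (sM p q) = (size p + size q).-1.
Proof.
move=> hp hq; have hsp : (0 < size p)%N by rewrite size_poly_gt0.
rewrite skew_mul_lead_term // size_polyDl size_skew_mul_lead_term //.
  by rewrite -{2}(prednK hsp) addSn addnC.
exact: size_skew_mul_lower.
Qed.

Lemma lead_coef_skew_mul (p q : {poly K}) : p != 0 -> q != 0 ->
  lead_coef (sM p q) = lead_coef p * iter (size p).-1 sigma (lead_coef q).
Proof.
move=> hp hq; rewrite skew_mul_lead_term // lead_coefDl; last first.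
  by rewrite size_skew_mul_lead_term // size_skew_mul_lower.
rewrite mul_polyC lead_coef_lreg ?lead_coef_iter_skew_mulT //.
by apply/mulrI/neq0_unit; rewrite lead_coef_eq0.
Qed.

Lemma size_skew_mul_XsubC (U : {poly K}) c : U != 0 ->
  size (sM U ('X - c%:P)) = (size U).+1.
Proof. by move=> hU; rewrite size_skew_mul ?polyXsubC_eq0 // size_XsubC addn2. Qed.

Lemma lead_coef_skew_mul_XsubC (U : {poly K}) c : U != 0 ->
  lead_coef (sM U ('X - c%:P)) = lead_coef U.
Proof.
by move=> hU; rewrite lead_coef_skew_mul ?polyXsubC_eq0 // lead_coefXsubC iter_sigma1 mulr1.
Qed.

Lemma skew_mul_XsubC_polyC (Q : {poly K}) a d :
  sM Q ('X - a%:P) = d%:P -> Q = 0.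
Proof.
move=> hQ; apply/eqP; apply: contraTT (size_polyC_leq1 d) => hQ0.
by rewrite -hQ size_skew_mul_XsubC // ltnS -ltnNge size_poly_gt0.
Qed.

Lemma skew_evalE (P Q : {poly K}) a c :
  P - c%:P = sM Q ('X - a%:P) -> skew_eval sigma delta P a = c.
Proof.
move=> hQ; rewrite /skew_eval.
have : exists c' Q', P - c'%:P = sM Q' ('X - a%:P) by exists c, Q.
move/(epsilon_spec (inhabits 0)); set e := epsilon _ _ => -[Q' hQ'].
have hce : sM (Q' - Q) ('X - a%:P) = (c - e)%:P.
  by rewrite skew_mulBl -hQ -hQ' opprB addrC subrKA polyCB.
move: (hce); rewrite (skew_mul_XsubC_polyC hce) skew_mul0r => /esym/eqP.
by rewrite polyC_eq0 subr_eq0 => /eqP.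
Qed.

Lemma skew_eval_XsubC b c : skew_eval sigma delta ('X - b%:P) c = c - b.
Proof. by apply: (@skew_evalE _ 1); rewrite skew_mul1l polyCB opprB addrA subrK. Qed.

Lemma skew_eval1 c : skew_eval sigma delta 1 c = 1.
Proof. by apply: (@skew_evalE _ 0); rewrite skew_mul0r subrr. Qed.

Local Notation is_rep := (is_rep sigma delta).

Lemma is_rep_refl (P Q : {poly K}) : P != 0 -> is_rep P Q P Q.
Proof. by move=> hP; split=> //; exists 1, 1; rewrite skew_mul1l. Qed.

Lemma monic_size2 (P : {poly K}) :
  P \is monic -> size P = 2%N -> P = 'X - (- P`_0)%:P.
Proof.
move=> /monicP hm hs; apply/polyP => -[|[|i]]; rewrite coefB coefX coefC /=.
- by rewrite sub0r opprK.
- by rewrite subr0 -hm lead_coefE hs.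
- by rewrite subr0 nth_default // hs.
Qed.

Lemma size_monic_rep_inv_XsubC b (P Q : {poly K}) :
  is_rep P Q ('X - b%:P) 1 -> P \is monic -> (1 < size P)%N.
Proof.
move=> [hP [U [U' [hUP hUP0 hUQ]]]] hm; rewrite ltnNge; apply/negP => hs.
have hP1 : P = 1.
  have hs1 : size P = 1%N by apply/eqP; rewrite eqn_leq hs size_poly_gt0.
  by rewrite (size1_polyC hs); move/monicP: hm; rewrite lead_coefE hs1 => ->.
move: hUP hUP0 hUQ; rewrite hP1 !skew_mulr1 => hUP hU hUQ.
have hU' : U' != 0 by apply: contraNneq hU => hU'; rewrite hUP hU' skew_mul0r.
have hQ : Q != 0 by apply: contraNneq hU' => hQ; rewrite -hUQ hQ skew_mulr0.
have hsU : size U = (size U').+1 by rewrite hUP size_skew_mul_XsubC.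
have := size_skew_mul hU hQ; rewrite hUQ hsU addSn /= => /eqP.
by rewrite -{1}[size U']addn0 eqn_add2l eq_sym size_poly_eq0 (negbTE hQ).
Qed.

Lemma skew_mul_polyC_eq0 (U : {poly K}) d : U != 0 -> sM U d%:P = 0 -> d = 0.
Proof.
move=> hU hUd; apply/eqP; apply: contraTT isT => hd.
have := size_skew_mul hU (_ : d%:P != 0); rewrite hUd size_poly0 size_polyC hd addn1 /=.
by rewrite polyC_eq0 => /(_ hd) /eqP; rewrite eq_sym size_poly_eq0 (negbTE hU).
Qed.

Lemma rep_inv_XsubC_linear b c (Q : {poly K}) :
  is_rep ('X - c%:P) Q ('X - b%:P) 1 -> c = b /\ Q = 1.
Proof.
move=> [_ [U [U' [hUU' hU0 hUQ]]]]; rewrite skew_mulr1 in hUQ.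
have hU : U != 0 by apply: contraNneq hU0 => ->; rewrite skew_mul0r.
have hU' : U' != 0 by apply: contraNneq hU0 => hU'; rewrite hUU' hU' skew_mul0r.
have hQ : Q != 0 by apply: contraNneq hU' => hQ; rewrite -hUQ hQ skew_mulr0.
have hsU : size U' = size U.
  by apply: succn_inj; rewrite -(size_skew_mul_XsubC c hU) -(size_skew_mul_XsubC b hU') hUU'.
have hsQ : (size Q <= 1)%N.
  have hQs : (0 < size Q)%N by rewrite size_poly_gt0.
  have := size_skew_mul hU hQ; rewrite hUQ hsU -(prednK hQs) addnS /=.
  by move=> /eqP; rewrite -{1}[size U]addn0 eqn_add2l => /eqP <-.
have hQ1 : Q = 1.
  have hlU : lead_coef U * iter (size U).-1 sigma (lead_coef Q) = lead_coef U * 1.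
    rewrite -lead_coef_skew_mul // hUQ mulr1 -(lead_coef_skew_mul_XsubC b hU').
    by rewrite -hUU' lead_coef_skew_mul_XsubC.
  have hlU0 : lead_coef U != 0 by rewrite lead_coef_eq0.
  move/(mulrI (neq0_unit hlU0)): hlU; rewrite -(iter_sigma1 (size U).-1).
  by move/iter_sigma_inj; rewrite (size1_polyC hsQ) lead_coefC => ->.
split=> //; apply/eqP; rewrite eq_sym -subr_eq0; apply/eqP.
apply: (skew_mul_polyC_eq0 hU).
have -> : (b - c)%:P = ('X - c%:P) - ('X - b%:P).
  by rewrite opprB [RHS]addrC addrA subrK polyCB.
by rewrite skew_mulBr hUU' -hUQ hQ1 skew_mulr1 subrr.
Qed.

Lemma minimal_rep_inv_XsubC b (P Q : {poly K}) :
  minimal_rep sigma delta P Q ('X - b%:P) 1 <-> P = 'X - b%:P /\ Q = 1.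
Proof.
have hb : is_rep ('X - b%:P) 1 ('X - b%:P) 1 by apply: is_rep_refl; rewrite polyXsubC_eq0.
split=> [[hPQ hm hmin] | [-> ->]]; last first.
  split=> // [|P' Q' hPQ' hm']; first exact: monicXsubC.
  by rewrite size_XsubC; apply: size_monic_rep_inv_XsubC hPQ' hm'.
have hs : size P = 2%N.
  apply/eqP; rewrite eqn_leq (size_monic_rep_inv_XsubC hPQ hm) andbT.
  by have := hmin _ _ hb (monicXsubC b); rewrite size_XsubC.
by move: hPQ; rewrite (monic_size2 hm hs) => /rep_inv_XsubC_linear [-> ->].
Qed.

Lemma act1 c : act 1 c = c.
Proof. by rewrite /skew_act rmorph1 delta1 invr1 !mulr1 mul1r addr0. Qed.

Lemma actM y u c : y != 0 -> u != 0 -> act y (act u c) = act (y * u) c.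
Proof.
move=> /neq0_unit hy /neq0_unit hu; rewrite /skew_act rmorphM deltaM (invrM hy hu).
by rewrite !mulrDr !mulrDl !mulrA -!addrA (mulrK hu).
Qed.

Lemma conj_class_refl a : conj a a.
Proof. by exists 1; rewrite ?oner_neq0 ?act1. Qed.

Lemma conj_class_act a c y : conj a c -> y != 0 -> conj a (act y c).
Proof. by move=> [u hu ->] hy; exists (y * u); rewrite ?mul_neq0 ?actM. Qed.

(* ((T - b) x)(c), as (T - b) x = sigma(x) T + delta(x) - b x. *)
Definition eval_XsubC_mul (b x c : K) : K := sigma x * c + delta x - b * x.

Lemma eval_XsubC_mulB b x y c :
  eval_XsubC_mul b (x - y) c = eval_XsubC_mul b x c - eval_XsubC_mul b y c.
Proof.
rewrite /eval_XsubC_mul rmorphB deltaB mulrBl mulrBr.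
rewrite [in RHS]opprD opprK [in RHS]opprD [RHS]addrACA.
by rewrite [X in _ = X + _]addrACA opprB (addrC (- (b * x))).
Qed.

Lemma eval_XsubC_mulE b x c : x != 0 -> eval_XsubC_mul b x c = (act x c - b) * x.
Proof. by move=> /neq0_unit hx; rewrite /skew_act mulrBl mulrDl !(mulrVK hx). Qed.

Lemma eval_XsubC_mul0 b c : eval_XsubC_mul b 0 c = 0.
Proof. by have := eval_XsubC_mulB b 0 0 c; rewrite !subrr. Qed.

Lemma eval_XsubC_mul_eq1_neq0 b x c : eval_XsubC_mul b x c = 1 -> x != 0.
Proof. by apply: contra_eqN => /eqP ->; rewrite eval_XsubC_mul0 eq_sym oner_eq0. Qed.

(* A nonzero solution of the homogeneous equation would conjugate c to b. *)
Lemma eval_XsubC_mul_inj a b c : ~ conj a b -> conj a c ->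
  injective (fun x => eval_XsubC_mul b x c).
Proof.
move=> hb hc x y /eqP; rewrite -subr_eq0 -eval_XsubC_mulB => hxy.
apply/eqP; rewrite -subr_eq0; apply: contraLR hxy => hxy.
rewrite eval_XsubC_mulE // mul_neq0 // subr_eq0.
by apply/eqP => hxyb; apply: hb; rewrite -hxyb; exact: conj_class_act.
Qed.

Lemma eval_XsubC_mul_inv b z : z != b ->
  eval_XsubC_mul b (z - b)^-1 (act (z - b) z) = 1.
Proof.
rewrite -subr_eq0 => hzb; have hzb' : (z - b)^-1 != 0 by rewrite invr_eq0.
by rewrite eval_XsubC_mulE // actM // mulVr ?neq0_unit // act1 mulrV ?neq0_unit.
Qed.

Lemma skew_prod_eq1_neq0 (f g : K -> K) z : skew_prod sigma delta f g z = 1 -> g z != 0.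
Proof. by apply: contra_eqN => /eqP hgz; rewrite /skew_prod hgz eqxx eq_sym oner_eq0. Qed.

Lemma skew_prod_XsubC b g z : g z != 0 ->
  skew_prod sigma delta (skew_eval sigma delta ('X - b%:P)) g z
    = eval_XsubC_mul b (g z) z.
Proof. by move=> hg; rewrite /skew_prod (negbTE hg) skew_eval_XsubC eval_XsubC_mulE. Qed.

Lemma defined_at_inv_XsubC a b :
  defined_at sigma delta ('X - b%:P) 1 a <->
  ~ conj a b /\ (forall c, conj a c -> exists x, eval_XsubC_mul b x c = 1).
Proof.
split=> [[P [Q [/minimal_rep_inv_XsubC [-> _] [g hg]]]] | [hb hsol]].
  have hg0 z : conj a z -> g z != 0 by move=> /hg [/skew_prod_eq1_neq0].
  split=> [hab | c hc].
    have [_] := hg b hab; rewrite /skew_prod skew_eval_XsubC subrr eqxx.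
    by move/eqP; rewrite eq_sym oner_eq0.
  by exists (g c); rewrite -skew_prod_XsubC ?hg0 //; case: (hg c hc).
pose g z := epsilon (inhabits 0) (fun x => eval_XsubC_mul b x z = 1).
have gP z : conj a z -> eval_XsubC_mul b (g z) z = 1.
  by move=> /hsol; apply: epsilon_spec.
exists ('X - b%:P), 1; split; first exact/minimal_rep_inv_XsubC.
exists g => z hz; have hgz := eval_XsubC_mul_eq1_neq0 (gP z hz).
split; first by rewrite skew_prod_XsubC ?gP.
have hzb : z != b by apply: contraPneq hb => <-.
have hzb0 : z - b != 0 by rewrite subr_eq0.
rewrite /skew_prod skew_eval_XsubC (negbTE hzb0).
have hw := conj_class_act hz hzb0.
have -> : g (act (z - b) z) = (z - b)^-1.
  by apply: (eval_XsubC_mul_inj hb hw); rewrite /= gP // eval_XsubC_mul_inv.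
by rewrite mulVr ?neq0_unit.
Qed.

Lemma value_at_inv_XsubC a b v :
  value_at sigma delta ('X - b%:P) 1 a v -> eval_XsubC_mul b v a = 1.
Proof.
move=> [P [Q [g [/minimal_rep_inv_XsubC [-> ->] hg ->]]]].
have [hga _] := hg a (conj_class_refl a).
rewrite /skew_prod skew_eval1 oner_eq0 act1 mulr1 -skew_prod_XsubC //.
exact: skew_prod_eq1_neq0 hga.
Qed.

End SkewPolynomials.

Theorem proposition3p2 (K : unitRingType) (sigma : {rmorphism K -> K})
  (delta : K -> K) (hK : is_skew_field K)
  (hdelta : is_sigma_derivation sigma delta) (a b : K) :
  (defined_at sigma delta ('X - b%:P) 1 a <->
     ~ conj_class sigma delta a b /\
     (forall c, conj_class sigma delta a c ->
        exists x : K, sigma x * c + delta x - b * x = 1)) /\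
  (defined_at sigma delta ('X - b%:P) 1 a ->
     (exists! x : K, sigma x * a + delta x - b * x = 1) /\
     (forall v, value_at sigma delta ('X - b%:P) 1 a v ->
        sigma v * a + delta v - b * v = 1)).
Proof.
have hdef := defined_at_inv_XsubC hK hdelta a b.
split; first exact: hdef.
move=> /hdef [hb hsol]; split; last exact: value_at_inv_XsubC.
have ha := conj_class_refl hdelta a.
have [x hx] := hsol a ha.
exists x; split=> // y hy.
by apply: (eval_XsubC_mul_inj hK hdelta hb ha); rewrite /= hx.
Qed.
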